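(* Let $p,q\geq 2$ be relatively prime integers, let $k\geq 2$ and $t>0$ be integers, and let $w_1,w_2\in A_{pq}^k$. Then (1) if $\mathrm{int}(w_1)<q^t$ then $\mathrm{int}(G_{p,q}(w_1))<q^{t-1}$; and (2) if $\mathrm{int}(w_2)\equiv\mathrm{int}(w_1)+q^t\pmod{(pq)^k}$ then $\mathrm{int}(G_{p,q}(w_2))\equiv\mathrm{int}(G_{p,q}(w_1))+q^{t-1}\pmod{(pq)^{k-1}}$.
   Context: For an integer $n>1$, $A_n=\{0,\dots,n-1\}$, and $A_n^k$ is the set of words of length $k$. Define $g_{p,q}:A_{pq}\times A_{pq}\to A_{pq}$ by writing $x=x_1q+x_0$, $y=y_1q+y_0$ with $x_0,y_0\in A_q$, $x_1,y_1\in A_p$ (uniquely), and $g_{p,q}(x,y)=x_0p+y_1$. For a word $w=w(1)\cdots w(m)$ with $m\geq2$, $G_{p,q}(w)=u(1)\cdots u(m-1)$ where $u(i)=g_{p,q}(w(i),w(i+1))$. For a nonempty word $w=w(1)\cdots w(m)$ over $A_{pq}$, $\mathrm{int}(w)=\sum_{i=0}^{m-1}w(m-i)(pq)^i$. *)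

From mathcomp Require Import all_boot.
Set Implicit Arguments. Unset Strict Implicit. Unset Printing Implicit Defensive.

Definition word_over (n : nat) (w : seq nat) : bool := all (fun a => a < n) w.

(* g_{p,q}(x,y) = x_0 p + y_1 where x = x_1 q + x_0, y = y_1 q + y_0, x_0,y_0 < q *)
Definition g (p q x y : nat) : nat := (x %% q) * p + y %/ q.

(* G_{p,q}(w(1)...w(m)) = u(1)...u(m-1), u(i) = g(w(i), w(i+1)) *)
Definition G (p q : nat) (w : seq nat) : seq nat :=
  pairmap (g p q) (head 0 w) (behead w).

(* int(w) = sum_{i=0}^{m-1} w(m-i) (pq)^i  (base-pq value, most significant first) *)
Definition int_of (p q : nat) (w : seq nat) : nat :=
  foldl (fun acc a => acc * (p * q) + a) 0 w.

From mathcomp Require Import all_boot.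

Set Implicit Arguments.
Unset Strict Implicit.
Unset Printing Implicit Defensive.

(* Read as base-[pq] numerals, [G] divides by [q] and forgets the leading digit:
   the digit [x_0 p + y_1] that [G] produces from [x = x_1 q + x_0] and
   [y = y_1 q + y_0] is exactly the base-[pq] digit of [int w %/ q] straddling
   [x] and [y].  Both claims are then arithmetic on [%/ q] and [%% (pq)^(k-1)]. *)

Lemma pairmap_rcons (T U : Type) (f : T -> T -> U) (x : T) (s : seq T) (a : T) :
  pairmap f x (rcons s a) = rcons (pairmap f x s) (f (last x s) a).
Proof. by elim: s x => [|y s IHs] x //=; rewrite IHs. Qed.

Lemma int_of_rcons p q s a : int_of p q (rcons s a) = int_of p q s * (p * q) + a.
Proof. by rewrite /int_of foldl_rcons. Qed.

Lemma G_rcons2 p q s b a :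
  G p q (rcons (rcons s b) a) = rcons (G p q (rcons s b)) (g p q b a).
Proof. by case: s => [|x s] //; rewrite /G /= pairmap_rcons last_rcons. Qed.

Lemma g_modl p q x y : g p q (x %% q) y = g p q x y.
Proof. by rewrite /g modn_mod. Qed.

Lemma g_lt p q x y : 0 < q -> y < p * q -> g p q x y < p * q.
Proof.
move=> q_gt0 y_lt; rewrite /g.
have y1_lt : y %/ q < p by rewrite ltn_divLR // mulnC.
apply: (@leq_trans ((x %% q).+1 * p)); first by rewrite mulSn addnC ltn_add2r.
by rewrite mulnC leq_mul2l ltn_mod q_gt0 orbT.
Qed.

Lemma divn_mulD_g p q y a :
  0 < q -> (y * (p * q) + a) %/ q = y %/ q * (p * q) + g p q y a.
Proof.
move=> q_gt0; rewrite /g {1}(divn_eq y q) addnA.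
have -> : (y %/ q * q + y %% q) * (p * q) = (y %/ q * (p * q) + y %% q * p) * q.
  by rewrite !mulnDl -!mulnA (mulnCA q).
by rewrite divnMDl.
Qed.

Lemma modn_mulD_expS x c N j :
  c < N -> (x * N + c) %% N ^ j.+1 = x %% N ^ j * N + c.
Proof.
move=> c_lt; have N_gt0 : 0 < N by apply: leq_ltn_trans c_lt.
rewrite {1}(divn_eq x (N ^ j)) mulnDl -mulnA -expnSr -addnA modnMDl modn_small //.
apply: (@leq_trans ((x %% N ^ j).+1 * N)); first by rewrite mulSn addnC ltn_add2r.
by rewrite expnSr leq_mul2r ltn_mod expn_gt0 N_gt0 orbT.
Qed.

Lemma int_of_G p q w : 0 < q -> word_over (p * q) w -> 0 < size w ->
  int_of p q (G p q w) = int_of p q w %/ q %% (p * q) ^ (size w).-1.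
Proof.
move=> q_gt0; elim/last_ind: w => [|s a IHs] //.
rewrite /word_over all_rcons size_rcons => /andP[a_lt s_over] _.
case/lastP: s IHs s_over => [|s b] IHs s_over; first by rewrite modn1.
have Yb_modq : int_of p q (rcons s b) %% q = b %% q.
  by rewrite int_of_rcons mulnA modnMDl.
rewrite G_rcons2 int_of_rcons IHs ?size_rcons //.
rewrite [int_of _ _ (rcons (rcons _ _) _)]int_of_rcons divn_mulD_g //.
by rewrite -[g p q b a]g_modl -Yb_modq g_modl modn_mulD_expS ?g_lt.
Qed.

Lemma divn_congr d n x y : x = y %[mod n * d] -> x %/ d = y %/ d %[mod n].
Proof. by rewrite !modn_divl => ->. Qed.

Theorem lemma9 (p q k t : nat) (w1 w2 : seq nat) :
  2 <= p -> 2 <= q -> coprime p q -> 2 <= k -> 0 < t ->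
  size w1 = k -> size w2 = k ->
  word_over (p * q) w1 -> word_over (p * q) w2 ->
  (int_of p q w1 < q ^ t -> int_of p q (G p q w1) < q ^ t.-1) /\
  (int_of p q w2 = int_of p q w1 + q ^ t %[mod (p * q) ^ k] ->
   int_of p q (G p q w2) = int_of p q (G p q w1) + q ^ t.-1 %[mod (p * q) ^ k.-1]).
Proof.
move=> _ q_ge2 _ k_ge2 t_gt0 size_w1 size_w2 w1_over w2_over.
have q_gt0 : 0 < q by apply: ltnW.
have k_gt0 : 0 < k by apply: ltnW.
have qt_split : q ^ t = q ^ t.-1 * q by rewrite -expnSr prednK.
rewrite !int_of_G ?size_w1 ?size_w2 //; split.
  move=> w1_lt; apply: leq_ltn_trans (leq_mod _ _) _.
  by rewrite ltn_divLR // -qt_split.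
set M := (p * q) ^ k.-1 => w2_congr.
have Mq_dvd : M * q %| (p * q) ^ k.
  by rewrite /M mulnC -{2}(prednK k_gt0) expnS -mulnA dvdn_mull.
have w2_congr_Mq : int_of p q w2 = int_of p q w1 + q ^ t %[mod M * q].
  by rewrite -(modn_dvdm (int_of p q w2) Mq_dvd) w2_congr (modn_dvdm _ Mq_dvd).
rewrite modn_mod modnDml (divn_congr w2_congr_Mq).
by rewrite qt_split divnDMl.
Qed.
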